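(* In the setting below, the iterates of Algorithm PDC satisfy, for all $k\ge0$, $$\psi(y^{k+1},v^{k+1};\rho^k)\le\psi(y^k,v^k;\rho^k)-\rho^k\beta^k\|(y^{k+1}-y^k,\ v^{k+1}-v^k)\|_2^2,$$ where $\psi(y,v;\rho)=F(y,v)+\rho\,\varphi(y,v)$.
   Context: Setting. $\mathcal A$ is a finite set of links; $\mathcal V=\{\Delta h: h\ge0,\ \Lambda h=d\}\subset\mathbb R^{|\mathcal A|}$, where $\Delta$ is a 0/1 link–route incidence matrix, $\Lambda$ a 0/1 OD–route incidence matrix in which every route belongs to exactly one OD pair and every OD pair has at least one route, and $d>0$ (so $\mathcal V$ is a nonempty compact convex polytope in $\mathbb R^{|\mathcal A|}_{\ge0}$). Let $u_a\ge0$, $\mathcal Y=\{y: 0\le y_a\le u_a\ \forall a\}$, $1\le\tau\le|\mathcal A|$, $\Upsilon_\tau=\{y\in\mathcal Y: |\{a: y_a>0\}|\le\tau\}$. Standing assumptions: each $t_a(y_a,v_a)$ is continuously differentiable and strictly increasing in $v_a$ for $y_a\ge0$; each $G_a$ is nonnegative, continuously differentiable, strictly increasing, convex; $\int_0^{v_a}t_a(y_a,w)dw$ and $t_a(y_a,v_a)v_a$ are convex in $(y_a,v_a)$. With $\eta>0$: $F(y,v)=\sum_a t_a(y_a,v_a)v_a+\eta\sum_aG_a(y_a)$, $f(y,v)=\sum_a\int_0^{v_a}t_a(y_a,w)dw$, $g(y)=\min_{v\in\mathcal V}f(y,v)$, $\varphi(y,v)=f(y,v)-g(y)$. $\mathcal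 V^*(y)$ is the set of $v\in\mathcal V$ with $\langle t(y,v),v'-v\rangle\ge0$ for all $v'\in\mathcal V$; it is a singleton equal to $\arg\min_{v\in\mathcal V}f(y,v)$. Known fact: $g$ is convex and continuously differentiable on $\mathcal Y$. Define $\Phi(y,v;\bar y,\bar v)=f(y,v)-g(\bar y)-\nabla g(\bar y)^{\mathsf T}(y-\bar y)$ and, for given $\rho^k,\beta^k>0$ and $(y^k,v^k)$, $\Psi^k(y,v)=F(y,v)+\rho^k\Phi(y,v;y^k,v^k)+\rho^k\beta^k\|(y-y^k,v-v^k)\|_2^2$. Algorithm AMA with inputs $(\rho^k,\beta^k,y^k,v^k;y^{k,0})$: for $j=0,1,\dots$: $v^{k,j+1}$ = unique minimizer of $\Psi^k(y^{k,j},\cdot)$ over $\mathcal V$; $y^{k,j+1}$ = a minimizer of $\Psi^k(\cdot,v^{k,j+1})$ over $\Upsilon_\tau$; stop if $(y^{k,j+1},v^{k,j+1})$ is partially optimal (i.e. $\Psi^k(y^{k,j+1},v^{k,j+1})\le\Psi^k(y^{k,j+1},v)\ \forall v\in\mathcal V$ and $\le\Psi^k(y,v^{k,j+1})\ \forall y\in\Upsilon_\tau$). $\mathrm{AMA}(\cdot)$ denotes the returned point if it stops, otherwise any accumulation point of its iterates. Algorithm PDC with parameters $\epsilon_1,\epsilon_2,\epsilon_3>0$, $0<\theta_l<\theta_u$, $\rho^0>0$, $\sigma>1$, $y^0\in\Upsilon_\tau$: set $v^0\in\mathcal V^*(y^0)$ and choose $\beta^0\in[\theta_l/\rho^0,\theta_u/\rho^0]$;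 for $k=0,1,\dots$: (i) $(y^{k+1},v^{k+1})=\mathrm{AMA}(\rho^k,\beta^k,y^k,v^k;y^k)$; (ii) if $\|y^{k+1}-y^k\|_2\le\epsilon_1$, $\|v^{k+1}-v^k\|_2\le\epsilon_2$ and $\Phi(y^{k+1},v^{k+1};y^k,v^k)\le\epsilon_3$, stop and return $(y^{k+1},v^{k+1})$; (iii) set $\rho^{k+1}=\sigma\rho^k$ if $\Phi(y^{k+1},v^{k+1};y^k,v^k)>\epsilon_3$, else $\rho^{k+1}=\rho^k$; (iv) choose $\beta^{k+1}\in[\theta_l/\rho^{k+1},\theta_u/\rho^{k+1}]$. *)

From HB Require Import structures.
From mathcomp Require Import all_boot all_order all_algebra.
From mathcomp Require Import all_classical all_reals all_analysis.
Set Implicit Arguments. Unset Strict Implicit. Unset Printing Implicit Defensive.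
Import Order.TTheory GRing.Theory Num.Theory.
Import numFieldNormedType.Exports.
Local Open Scope classical_set_scope.
Local Open Scope ring_scope.

Section PDCModel.
Variables (R : realType) (n m p : nat).
(* links = 'I_n, routes = 'I_m, OD pairs = 'I_p; vectors in R^|A| are 'I_n -> R *)
Variables (Delta : 'I_n -> 'I_m -> bool) (Lambda : 'I_p -> 'I_m -> bool)
          (d : 'I_p -> R) (u : 'I_n -> R) (tau : nat)
          (t : 'I_n -> R -> R -> R) (G : 'I_n -> R -> R) (eta : R)
          (dg : ('I_n -> R) -> ('I_n -> R)). (* dg = the gradient of g *)

Definition Vset : set ('I_n -> R) :=
  [set v | exists h : 'I_m -> R, (forall r, 0 <= h r) /\
     (forall w, \sum_(r < m) (Lambda w r)%:R * h r = d w) /\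
     (forall a, v a = \sum_(r < m) (Delta a r)%:R * h r)].

Definition Yset : set ('I_n -> R) := [set y | forall a, 0 <= y a <= u a].

Definition Ups : set ('I_n -> R) :=
  [set y | Yset y /\ (#|[set a : 'I_n | (0 < y a)%R]| <= tau)%N].

Definition Fobj (y v : 'I_n -> R) : R :=
  \sum_(a < n) t a (y a) (v a) * v a + eta * \sum_(a < n) G a (y a).

Definition prim (a : 'I_n) (y w : R) : R :=
  \int[lebesgue_measure]_(s in `[0, w]) t a y s.

Definition fobj (y v : 'I_n -> R) : R := \sum_(a < n) prim a (y a) (v a).

(* g(y) = min_{v in V} f(y,v) (written as an infimum; the min is attained) *)
Definition gval (y : 'I_n -> R) : R := inf [set fobj y v | v in Vset].

Definition phi (y v : 'I_n -> R) : R := fobj y v - gval y.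

Definition psi (y v : 'I_n -> R) (rho : R) : R := Fobj y v + rho * phi y v.

Definition sqdist (y v y' v' : 'I_n -> R) : R :=
  \sum_(a < n) (y a - y' a) ^+ 2 + \sum_(a < n) (v a - v' a) ^+ 2.

Definition norm2 (x : 'I_n -> R) : R := Num.sqrt (\sum_(a < n) x a ^+ 2).

Definition Phi (y v yb vb : 'I_n -> R) : R :=
  fobj y v - gval yb - \sum_(a < n) dg yb a * (y a - yb a).

Definition Psi (rho beta : R) (yk vk : 'I_n -> R) (y v : 'I_n -> R) : R :=
  Fobj y v + rho * Phi y v yk vk + rho * beta * sqdist y v yk vk.

Definition Vstar (y : 'I_n -> R) : set ('I_n -> R) :=
  [set v | Vset v /\ forall v', Vset v' ->
     0 <= \sum_(a < n) t a (y a) (v a) * (v' a - v a)].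

Definition partial_opt rho beta yk vk (y v : 'I_n -> R) : Prop :=
  (forall v', Vset v' -> Psi rho beta yk vk y v <= Psi rho beta yk vk y v') /\
  (forall y', Ups y' -> Psi rho beta yk vk y v <= Psi rho beta yk vk y' v).

Definition accum_point (s : nat -> ('I_n -> R) * ('I_n -> R))
    (q : ('I_n -> R) * ('I_n -> R)) : Prop :=
  forall e : R, 0 < e -> forall N : nat, exists j : nat,
    (N <= j)%N /\ sqdist (s j).1 (s j).2 q.1 q.2 < e.

(* out is a possible value of AMA(rho, beta, yk, vk; y0) *)
Definition AMA_out rho beta (yk vk y0 : 'I_n -> R)
    (out : ('I_n -> R) * ('I_n -> R)) : Prop :=
  exists ys vs : nat -> ('I_n -> R),
    ys 0%N = y0 /\
    (forall j, Vset (vs j.+1) /\ forall v', Vset v' ->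
        Psi rho beta yk vk (ys j) (vs j.+1) <= Psi rho beta yk vk (ys j) v') /\
    (forall j, Ups (ys j.+1) /\ forall y', Ups y' ->
        Psi rho beta yk vk (ys j.+1) (vs j.+1) <= Psi rho beta yk vk y' (vs j.+1)) /\
    ((exists J, partial_opt rho beta yk vk (ys J.+1) (vs J.+1) /\
        (forall j, (j < J)%N -> ~ partial_opt rho beta yk vk (ys j.+1) (vs j.+1)) /\
        out = (ys J.+1, vs J.+1)) \/
     ((forall j, ~ partial_opt rho beta yk vk (ys j.+1) (vs j.+1)) /\
        accum_point (fun j => (ys j.+1, vs j.+1)) out)).

(* step k of PDC is executed iff the algorithm has not stopped before k *)
Definition executed (K : option nat) (k : nat) : Prop :=
  match K with Some K0 => (k <= K0)%N | None => True end.

(* (y, v, rho, beta) are the iterates of PDC; K = Some K0 if the algorithm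
   stops (returns) at iteration K0, K = None if it never stops. *)
Definition PDC_run (eps1 eps2 eps3 theta_l theta_u rho0 sigma : R)
    (y0 : 'I_n -> R) (y v : nat -> ('I_n -> R)) (rho beta : nat -> R)
    (K : option nat) : Prop :=
  [/\ y 0%N = y0, Vstar (y 0%N) (v 0%N), rho 0%N = rho0,
      theta_l / rho 0%N <= beta 0%N <= theta_u / rho 0%N &
      forall k, executed K k ->
        [/\ AMA_out (rho k) (beta k) (y k) (v k) (y k) (y k.+1, v k.+1),
            (norm2 (fun a => y k.+1 a - y k a) <= eps1 /\
             norm2 (fun a => v k.+1 a - v k a) <= eps2 /\
             Phi (y k.+1) (v k.+1) (y k) (v k) <= eps3) <-> K = Some k &
            K <> Some k ->
              rho k.+1 = (if eps3 < Phi (y k.+1) (v k.+1) (y k) (v k)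
                          then sigma * rho k else rho k) /\
              theta_l / rho k.+1 <= beta k.+1 <= theta_u / rho k.+1]].

End PDCModel.

From HB Require Import structures.
From mathcomp Require Import all_boot all_order all_algebra.
From mathcomp Require Import all_classical all_reals all_analysis.
From mathcomp Require Import lra ring.
Set Implicit Arguments. Unset Strict Implicit. Unset Printing Implicit Defensive.
Import Order.TTheory GRing.Theory Num.Theory.
Import numFieldNormedType.Exports.
Local Open Scope classical_set_scope.
Local Open Scope ring_scope.

(* At its centre, Psi^k equals psi(.; rho^k), and AMA never increases Psi^k, so
   Psi^k(y^{k+1}, v^{k+1}) <= psi(y^k, v^k; rho^k).  Since g is convex (as a partial
   minimum of the jointly convex f over the convex set V), its linearisation at y^k
   lies below g, hence Psi^k(y^{k+1}, v^{k+1}) >= psi(y^{k+1}, v^{k+1}; rho^k)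
   + rho^k beta^k ||(y^{k+1} - y^k, v^{k+1} - v^k)||^2.
   The analytic work is in the case where AMA does not stop and returns an
   accumulation point of its iterates: Psi^k is continuous on the nonnegative
   orthant (the integral of t_a, nondecreasing in its second argument, is squeezed
   between lower and upper Riemann sums), so the descent passes to the limit; and
   v^k is then only known to lie in the closure of V, where the first AMA step
   still does not increase Psi^k, again by continuity. *)

Section MonotoneIntegral.
Variable R : realType.
Notation mu := (@lebesgue_measure R).

Lemma continuous_integrable_itv (f : R -> R) (b0 b1 : bool) (x y : R) :
  continuous f ->
  mu.-integrable [set` Interval (BSide b0 x) (BSide b1 y)] (EFin \o f).
Proof.
move=> cont_f; apply: (@integrableS _ _ _ mu `[x, y]) => //.
- by apply: subset_itvScc; case: b0; case: b1; rewrite bnd_simp.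
- apply: continuous_compact_integrable; first exact: segment_compact.
  by move=> z; apply: continuous_subspaceT.
Qed.

Variable f : R -> R.
Hypothesis cont_f : continuous f.
Hypothesis nd_f : {homo f : x y / x <= y}.

Lemma Rintegral_itv_cc_split (a x b : R) : a <= x -> x <= b ->
  \int[mu]_(s in `[a, b]) f s
  = \int[mu]_(s in `[a, x]) f s + \int[mu]_(s in `]x, b]) f s.
Proof.
move=> ax xb; have int_f := @continuous_integrable_itv f true false a b cont_f.
by rewrite -(Rintegral_itvB int_f) ?bnd_simp // addrC subrK.
Qed.

Let Rintegral_itv_oc_cst (a b c : R) : a <= b ->
  \int[mu]_(s in `]a, b]) c = (b - a) * c.
Proof.
move=> ab; have mu_ab : mu `]a, b] = (b - a)%:E.
  rewrite lebesgue_measure_itv /= lte_fin.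
  by case: ltgtP ab => // -> _; rewrite subrr.
by rewrite Rintegral_cst // mulrC; congr (_ * _); exact: (congr1 fine mu_ab).
Qed.

Lemma Rintegral_itv_oc_ge (a b : R) : a <= b ->
  (b - a) * f a <= \int[mu]_(s in `]a, b]) f s.
Proof.
move=> ab; rewrite -Rintegral_itv_oc_cst //.
apply: le_Rintegral => //.
- by apply: continuous_integrable_itv; exact: cst_continuous.
- exact: continuous_integrable_itv.
- by move=> s; rewrite /= in_itv /= => /andP[/ltW le_as _]; exact: nd_f.
Qed.

Lemma Rintegral_itv_oc_le (a b : R) : a <= b ->
  \int[mu]_(s in `]a, b]) f s <= (b - a) * f b.
Proof.
move=> ab; rewrite -Rintegral_itv_oc_cst //.
apply: le_Rintegral => //.
- exact: continuous_integrable_itv.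
- by apply: continuous_integrable_itv; exact: cst_continuous.
- by move=> s; rewrite /= in_itv /= => /andP[_ sb]; exact: nd_f.
Qed.

Let Rintegral_itv_next (h : R) (k : nat) : 0 <= h ->
  \int[mu]_(s in `[0, k.+1%:R * h]) f s = \int[mu]_(s in `[0, k%:R * h]) f s
    + \int[mu]_(s in `]k%:R * h, k%:R * h + h]) f s.
Proof.
move=> h0; rewrite -[k.+1]addn1 natrD mulrDl mul1r.
by rewrite (@Rintegral_itv_cc_split _ (k%:R * h)) ?mulr_ge0 ?lerDl.
Qed.

Let Rintegral_itv_cc00 : \int[mu]_(s in `[0, 0]) f s = 0.
Proof. by rewrite set_itv1 Rintegral_set1. Qed.

Lemma lower_Riemann_sum_le (h : R) (k : nat) : 0 <= h ->
  \sum_(i < k) h * f (i%:R * h) <= \int[mu]_(s in `[0, k%:R * h]) f s.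
Proof.
move=> h0; elim: k => [|k IHk]; first by rewrite big_ord0 mul0r Rintegral_itv_cc00.
rewrite big_ord_recr Rintegral_itv_next //; apply: lerD => //.
have := @Rintegral_itv_oc_ge (k%:R * h) (k%:R * h + h).
by rewrite lerDl addrAC subrr add0r; exact.
Qed.

Lemma upper_Riemann_sum_ge (h : R) (k : nat) : 0 <= h ->
  \int[mu]_(s in `[0, k%:R * h]) f s <= \sum_(i < k) h * f (i.+1%:R * h).
Proof.
move=> h0; elim: k => [|k IHk]; first by rewrite big_ord0 mul0r Rintegral_itv_cc00.
rewrite big_ord_recr Rintegral_itv_next //; apply: lerD => //.
have := @Rintegral_itv_oc_le (k%:R * h) (k%:R * h + h).
by rewrite lerDl addrAC subrr add0r -[k.+1]addn1 natrD mulrDl mul1r; exact.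
Qed.

Lemma Rintegral_itv_cc_ge (w : R) : 0 <= w -> w * f 0 <= \int[mu]_(s in `[0, w]) f s.
Proof.
by move=> w0; have := lower_Riemann_sum_le 1 w0; rewrite big_ord1 !mul0r mul1r.
Qed.

End MonotoneIntegral.

Definition quadrant {R : numDomainType} : set (R * R) := [set q | 0 <= q.1 /\ 0 <= q.2].

Definition Riemann_sum {R : realType} (T : R -> R -> R) (c : nat -> R) (N : nat)
    (q : R * R) : R :=
  \sum_(i < N) q.2 / N%:R * T q.1 (c i * (q.2 / N%:R)).

Section ParametricIntegral.
Variable R : realType.
Notation mu := (@lebesgue_measure R).
Variable T : R -> R -> R.
Hypothesis T_cont : forall y s, 0 <= y -> {for (y, s), continuous (fun q : R * R => T q.1 q.2)}.
Hypothesis T_nd : forall y, 0 <= y -> {homo T y : s1 s2 / s1 <= s2}.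

Lemma slice_continuous y : 0 <= y -> continuous (T y).
Proof.
move=> y0 s.
apply: (@continuous_comp _ _ _ (fun s : R => (y, s)) (fun q : R * R => T q.1 q.2)).
  by apply: (@cvg_pair _ _ _ _ (nbhs y) (nbhs s)); [exact: cvg_cst | exact: cvg_id].
exact: T_cont.
Qed.

Lemma Riemann_sum_continuous (c : nat -> R) (N : nat) (y0 w0 : R) : 0 <= y0 ->
  {for (y0, w0), continuous (Riemann_sum T c N)}.
Proof.
move=> y00; rewrite /continuous_at /Riemann_sum.
apply: (@cvg_big _ _ +%R 0 xpredT (@add_continuous _)) => // i _; apply: cvgM.
  by apply: cvgMr_tmp; exact: cvg_snd.
apply: (@continuous_comp _ _ _ (fun q : R * R => (q.1, c i * (q.2 / N%:R)))
  (fun q : R * R => T q.1 q.2)); last exact: T_cont.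
apply: (@cvg_pair _ _ _ _ (nbhs (y0, w0).1) (nbhs (c i * ((y0, w0).2 / N%:R)))).
  exact: cvg_fst.
by apply: cvgMl_tmp; apply: cvgMr_tmp; exact: cvg_snd.
Qed.

(* Squeeze between the lower and upper Riemann sums with N steps: both are
   continuous, and at (y0, w0) they differ by (w0 / N) (T y0 w0 - T y0 0). *)
Lemma Rintegral_param_cvg (y0 w0 : R) : quadrant (y0, w0) ->
  \int[mu]_(s in `[0, q.2]) T q.1 s @[q --> within quadrant (nbhs (y0, w0))]
    --> \int[mu]_(s in `[0, w0]) T y0 s.
Proof.
move=> [y00 w00]; apply/cvgrPdist_lt => e e0.
have e2 : 0 < e / 2 by rewrite divr_gt0.
set C := T y0 w0 - T y0 0.
pose N := (Num.truncn (w0 * C / (e / 2))).+1.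
have N0 : 0 < N%:R :> R by rewrite ltr0n.
have NC : w0 * C / (e / 2) < N%:R by exact: truncnS_gt.
have NwN (w : R) : N%:R * (w / N%:R) = w by rewrite mulrCA divff ?mulr1 ?gt_eqF.
pose L := Riemann_sum T (fun i => i%:R) N; pose U := Riemann_sum T (fun i => i.+1%:R) N.
have lower q : quadrant q -> L q <= \int[mu]_(s in `[0, q.2]) T q.1 s.
  move=> [q1 q2]; rewrite -[X in `[0, X]]NwN.
  apply: lower_Riemann_sum_le; [exact: slice_continuous | exact: T_nd | exact: divr_ge0].
have upper q : quadrant q -> \int[mu]_(s in `[0, q.2]) T q.1 s <= U q.
  move=> [q1 q2]; rewrite -[X in `[0, X]]NwN.
  apply: upper_Riemann_sum_ge; [exact: slice_continuous | exact: T_nd | exact: divr_ge0].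
have gap : U (y0, w0) - L (y0, w0) < e / 2.
  pose r (j : nat) := w0 / N%:R * T y0 (j%:R * (w0 / N%:R)).
  have -> : U (y0, w0) - L (y0, w0) = \sum_(i < N) (r i.+1 - r i).
    by rewrite /U /L /Riemann_sum -sumrB.
  rewrite -(big_mkord xpredT (fun i => r i.+1 - r i)) telescope_sumr // /r NwN mul0r.
  by rewrite -mulrBr -/C mulrAC ltr_pdivrMr // -ltr_pdivrMl // mulrC.
have close q : quadrant q -> `|L (y0, w0) - L q| < e / 2 -> `|U (y0, w0) - U q| < e / 2 ->
    `|\int[mu]_(s in `[0, w0]) T y0 s - \int[mu]_(s in `[0, q.2]) T q.1 s| < e.
  move=> Qq; have := lower q Qq; have := upper q Qq.
  have := lower (y0, w0) (conj y00 w00); have := upper (y0, w0) (conj y00 w00).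
  move: gap; rewrite !ltr_norml => gap *; apply/andP; split; lra.
have cvg_sum c : Riemann_sum T c N q @[q --> within quadrant (nbhs (y0, w0))]
    --> Riemann_sum T c N (y0, w0).
  by apply: cvg_within_filter; exact: Riemann_sum_continuous.
near=> q; apply: close.
- by near: q; exact: withinT.
- by near: q; move/cvgrPdist_lt: (cvg_sum (fun i => i%:R)); apply.
- by near: q; move/cvgrPdist_lt: (cvg_sum (fun i => i.+1%:R)); apply.
Unshelve. all: by end_near.
Qed.

End ParametricIntegral.

Lemma right_derivative_le_chord (R : realType) (phi : R -> R) (l : R) :
  (forall s, 0 < s < 1 -> phi s <= s * phi 1 + (1 - s) * phi 0) ->
  (phi s - phi 0) / s @[s --> 0^'+] --> l -> l <= phi 1 - phi 0.
Proof.
move=> phi_convex phi_l; rewrite leNgt; apply/negP => chord_lt.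
suff : \forall s \near (0 : R)^'+, False by move/filter_const.
near=> s.
have s0 : 0 < s by near: s; exact: nbhs_right_gt.
have s1 : s < 1 by near: s; exact: nbhs_right_lt.
have : phi 1 - phi 0 < (phi s - phi 0) / s by near: s; exact: cvgr_gt phi_l _ chord_lt.
rewrite ltr_pdivlMr // => slope_gt.
have := phi_convex s; rewrite s0 s1 => /(_ isT); lra.
Unshelve. all: by end_near.
Qed.

Section Network.
Variables (R : realType) (n m p : nat).
Variables (Delta : 'I_n -> 'I_m -> bool) (Lambda : 'I_p -> 'I_m -> bool)
          (d : 'I_p -> R) (t : 'I_n -> R -> R -> R).
Notation V := (Vset Delta Lambda d).
Notation g := (gval Delta Lambda d t).

Lemma Vset_ge0 v : V v -> forall a, 0 <= v a.
Proof.
move=> [h [h0 [_ hv]]] a; rewrite hv; apply: sumr_ge0 => r _.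
by apply: mulr_ge0 => //; rewrite ler0n.
Qed.

Lemma Vset_convex v1 v2 lam : V v1 -> V v2 -> 0 <= lam <= 1 ->
  V (fun a => lam * v1 a + (1 - lam) * v2 a).
Proof.
move=> [h1 [h10 [hd1 hv1]]] [h2 [h20 [hd2 hv2]]] /andP[l0 l1].
exists (fun r => lam * h1 r + (1 - lam) * h2 r); split; [|split].
- by move=> r; apply: addr_ge0; apply: mulr_ge0 => //; rewrite subr_ge0.
- move=> w; have -> : d w = lam * d w + (1 - lam) * d w by ring.
  rewrite -{1}(hd1 w) -(hd2 w) !mulr_sumr -big_split /=.
  by apply: eq_bigr => r _; ring.
- by move=> a; rewrite hv1 hv2 !mulr_sumr -big_split /=; apply: eq_bigr => r _; ring.
Qed.

Hypothesis route_od : forall r : 'I_m, exists! w : 'I_p, Lambda w r.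

(* Every route serves exactly one OD pair, so the total route flow is the total demand. *)
Lemma Vset_le_demand v : V v -> forall a, v a <= \sum_(w < p) d w.
Proof.
move=> [h [h0 [hd hv]]] a.
have -> : \sum_(w < p) d w = \sum_(r < m) h r.
  under eq_bigr do rewrite -hd.
  rewrite exchange_big /=; apply: eq_bigr => r _.
  have [w0 [Lw0 w0_uniq]] := route_od r.
  rewrite (bigD1 w0) //= Lw0 mul1r big1 ?addr0 // => w ww0.
  case Lw: (Lambda w r); last by rewrite mul0r.
  by rewrite (w0_uniq w Lw) eqxx in ww0.
rewrite hv; apply: ler_sum => r _; rewrite -[leRHS]mul1r ler_wpM2r //.
by case: (Delta a r).
Qed.

Hypothesis t_cont : forall a y s, 0 <= y -> {for (y, s), continuous (fun q : R * R => t a q.1 q.2)}.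
Hypothesis t_nd : forall a y, 0 <= y -> {homo t a y : s1 s2 / s1 <= s2}.
Hypothesis V_nonempty : exists v, V v.

Lemma fobj_ge (y v : 'I_n -> R) : (forall a, 0 <= y a) -> V v ->
  - ((\sum_(w < p) d w) * \sum_(a < n) `|t a (y a) 0|) <= fobj t y v.
Proof.
move=> y0 Vv; rewrite mulr_sumr -sumrN; apply: ler_sum => a _.
have := Rintegral_itv_cc_ge (slice_continuous (@t_cont a) (y0 a)) (@t_nd a _ (y0 a))
  (Vset_ge0 Vv a).
apply: le_trans.
rewrite -mulrN; apply: (@le_trans _ _ (v a * - `|t a (y a) 0|)).
  by apply: ler_wnM2r; [rewrite oppr_le0 | exact: Vset_le_demand].
by apply: ler_wpM2l; [exact: Vset_ge0 | rewrite lerNl -normrN ler_norm].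
Qed.

Let fobj_has_inf y : (forall a, 0 <= y a) -> has_inf [set fobj t y v | v in V].
Proof.
move=> y0; split; first by have [v Vv] := V_nonempty; exists (fobj t y v), v.
exists (- ((\sum_(w < p) d w) * \sum_(a < n) `|t a (y a) 0|)).
by move=> _ [v Vv <-]; exact: fobj_ge.
Qed.

Lemma gval_le y v : (forall a, 0 <= y a) -> V v -> g y <= fobj t y v.
Proof. by move=> y0 Vv; apply: (ge_inf (fobj_has_inf y0).2); exists v. Qed.

Lemma gval_approx y e : (forall a, 0 <= y a) -> 0 < e ->
  exists2 v, V v & fobj t y v < g y + e.
Proof.
by move=> y0 e0; have [_ [v Vv <-]] := inf_adherent e0 (fobj_has_inf y0); exists v.
Qed.

Hypothesis prim_convex : forall a y1 w1 y2 w2 lam, 0 <= y1 -> 0 <= w1 -> 0 <= y2 -> 0 <= w2 ->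
  0 <= lam <= 1 ->
  prim t a (lam * y1 + (1 - lam) * y2) (lam * w1 + (1 - lam) * w2)
    <= lam * prim t a y1 w1 + (1 - lam) * prim t a y2 w2.

Lemma gval_convex y1 y2 lam : (forall a, 0 <= y1 a) -> (forall a, 0 <= y2 a) ->
  0 <= lam <= 1 ->
  g (fun a => lam * y1 a + (1 - lam) * y2 a) <= lam * g y1 + (1 - lam) * g y2.
Proof.
move=> y10 y20 lam01; have /andP[lam0 lam1] := lam01.
have lam0' : 0 <= 1 - lam by rewrite subr_ge0.
apply/ler_addgt0Pr => e e0.
have [v1 V1 f1] := gval_approx y10 e0; have [v2 V2 f2] := gval_approx y20 e0.
have ym0 a : 0 <= lam * y1 a + (1 - lam) * y2 a by rewrite addr_ge0 ?mulr_ge0.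
apply: le_trans (gval_le ym0 (Vset_convex V1 V2 lam01)) _.
have : fobj t (fun a => lam * y1 a + (1 - lam) * y2 a)
         (fun a => lam * v1 a + (1 - lam) * v2 a)
       <= lam * fobj t y1 v1 + (1 - lam) * fobj t y2 v2.
  rewrite /fobj !mulr_sumr -big_split; apply: ler_sum => a _.
  by apply: prim_convex => //; exact: Vset_ge0.
have := ler_wpM2l lam0 (ltW f1); have := ler_wpM2l lam0' (ltW f2).
lra.
Qed.

Lemma gval_gradient_ineq (dgy y yk : 'I_n -> R) :
  (forall a, 0 <= y a) -> (forall a, 0 <= yk a) ->
  (g (fun a => yk a + s * (y a - yk a)) - g yk) / s @[s --> 0^'+]
    --> \sum_(a < n) dgy a * (y a - yk a) ->
  \sum_(a < n) dgy a * (y a - yk a) <= g y - g yk.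
Proof.
move=> y0 yk0 dir_deriv.
pose phi s := g (fun a => yk a + s * (y a - yk a)).
have phi0 : phi 0 = g yk by congr g; apply: funext => a; rewrite mul0r addr0.
have phi1 : phi 1 = g y by congr g; apply: funext => a; rewrite mul1r addrC subrK.
rewrite -phi0 -phi1; apply: right_derivative_le_chord; last by rewrite phi0.
move=> s /andP[s0 s1]; rewrite phi0 phi1 /phi.
have -> : (fun a => yk a + s * (y a - yk a)) = (fun a => s * y a + (1 - s) * yk a).
  by apply: funext => a; ring.
by apply: gval_convex => //; rewrite (ltW s0) (ltW s1).
Qed.

End Network.

Section NonnegNeighbourhoods.
Variables (R : realType) (n : nat).
Notation point := (('I_n -> R) * ('I_n -> R))%type.

(* Sup-distance neighbourhoods restricted to the nonnegative orthant, where the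
   hypotheses on t and G hold. *)
Definition nonneg_ball (z : point) (e : R) : set point :=
  [set z' | forall a, quadrant (z'.1 a, z'.2 a)
                      /\ `|z'.1 a - z.1 a| < e /\ `|z'.2 a - z.2 a| < e].

Definition nonneg_nbhs (z : point) : set_system point :=
  filter_from [set e | 0 < e] (nonneg_ball z).

Global Instance nonneg_nbhs_filter z : Filter (nonneg_nbhs z).
Proof.
apply: filter_from_filter; first by exists 1 => /=.
move=> e1 e2 /= e10 e20; exists (Num.min e1 e2); first by rewrite /= lt_min e10.
move=> z' z'e; split=> a; have [Qa [lt1 lt2]] := z'e a;
  by move: lt1 lt2; rewrite !lt_min => /andP[? ?] /andP[? ?].
Qed.

Lemma nonneg_nbhs_link (z : point) (a : 'I_n) :
  (z'.1 a, z'.2 a) @[z' --> nonneg_nbhs z] --> within quadrant (nbhs (z.1 a, z.2 a)).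
Proof.
move=> P; rewrite /within /= => /nbhs_ballP[e /= e0 eP].
exists e => // z' /(_ a) [Qa [lt1 lt2]]; apply: eP => //.
by split; rewrite /ball /= distrC.
Qed.

Lemma nonneg_nbhs_le (f : point -> R) (z : point) (c : R) :
  f z' @[z' --> nonneg_nbhs z] --> f z ->
  (forall e, 0 < e -> exists2 z', nonneg_ball z e z' & f z' <= c) -> f z <= c.
Proof.
move=> fz approx; rewrite leNgt; apply/negP => /(cvgr_gt _ fz) [e /= e0 eP].
by have [z' z'e] := approx e e0; rewrite leNgt eP.
Qed.

Lemma nonneg_nbhs_ge (f : point -> R) (z : point) (c : R) :
  f z' @[z' --> nonneg_nbhs z] --> f z ->
  (forall e, 0 < e -> exists2 z', nonneg_ball z e z' & c <= f z') -> c <= f z.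
Proof.
move=> fz approx; rewrite leNgt; apply/negP => /(cvgr_lt _ fz) [e /= e0 eP].
by have [z' z'e] := approx e e0; rewrite leNgt eP.
Qed.

End NonnegNeighbourhoods.

Section PsiContinuity.
Variables (R : realType) (n m p : nat).
Variables (Delta : 'I_n -> 'I_m -> bool) (Lambda : 'I_p -> 'I_m -> bool)
          (d : 'I_p -> R) (t : 'I_n -> R -> R -> R) (G : 'I_n -> R -> R) (eta : R)
          (dg : ('I_n -> R) -> ('I_n -> R)).
Variables (rho beta : R) (yk vk : 'I_n -> R).
Notation point := (('I_n -> R) * ('I_n -> R))%type.
Notation Psik := (Psi Delta Lambda d t G eta dg rho beta yk vk).

Definition Psi_link (a : 'I_n) (q : R * R) : R :=
  t a q.1 q.2 * q.2 + eta * G a q.1 + rho * (prim t a q.1 q.2 - dg yk a * (q.1 - yk a))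
  + rho * beta * ((q.1 - yk a) ^+ 2 + (q.2 - vk a) ^+ 2).

Lemma Psi_sum_link (y v : 'I_n -> R) :
  Psik y v = - (rho * gval Delta Lambda d t yk) + \sum_(a < n) Psi_link a (y a, v a).
Proof.
rewrite /Psi /Fobj /Phi /fobj /sqdist /Psi_link !big_split /= -!mulr_sumr sumrB big_split /=.
ring.
Qed.

Hypothesis t_cont : forall a y s, 0 <= y -> {for (y, s), continuous (fun q : R * R => t a q.1 q.2)}.
Hypothesis t_nd : forall a y, 0 <= y -> {homo t a y : s1 s2 / s1 <= s2}.
Hypothesis G_cont : forall a y, 0 <= y -> {for y, continuous (G a)}.

Lemma Psi_link_cvg (a : 'I_n) (q : R * R) : quadrant q ->
  Psi_link a x @[x --> within quadrant (nbhs q)] --> Psi_link a q.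
Proof.
case: q => y0 w0 Qq; have [/= y00 w00] := Qq.
have within_cvg (f : R * R -> R) : {for (y0, w0), continuous f} ->
    f x @[x --> within quadrant (nbhs (y0, w0))] --> f (y0, w0).
  exact: cvg_within_filter.
apply: cvgD; first apply: cvgD; [apply: cvgD| |].
- apply: within_cvg; apply: cvgM; [exact: t_cont | exact: cvg_snd].
- apply: within_cvg; apply: cvgMl_tmp.
  by apply: (@continuous_comp _ _ _ fst (G a)); [exact: cvg_fst | exact: G_cont].
- apply: cvgMl_tmp; apply: cvgB; first exact: (Rintegral_param_cvg (@t_cont a) (@t_nd a)).
  apply: within_cvg; apply: cvgMl_tmp; apply: cvgB; [exact: cvg_fst | exact: cvg_cst].
- apply: within_cvg; apply: cvgMl_tmp.
  by apply: cvgD; apply: cvgM; apply: cvgB;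
    (exact: cvg_fst || exact: cvg_snd || exact: cvg_cst).
Qed.

Lemma Psi_cvg (z : point) : (forall a, quadrant (z.1 a, z.2 a)) ->
  Psik z'.1 z'.2 @[z' --> nonneg_nbhs z] --> Psik z.1 z.2.
Proof.
move=> Qz; under eq_cvg do rewrite Psi_sum_link; rewrite Psi_sum_link.
apply: cvgD; first exact: cvg_cst.
apply: (@cvg_big _ _ +%R 0 xpredT (@add_continuous _)) => // a _.
exact: cvg_comp (@nonneg_nbhs_link _ _ z a) (Psi_link_cvg (Qz a)).
Qed.

End PsiContinuity.

Lemma le_of_approx (R : realFieldType) (x c : R) :
  (forall e, 0 < e -> exists2 x', `|x' - x| < e & x' <= c) -> x <= c.
Proof.
move=> approx; apply/ler_addgt0Pr => e e0; have [x' + x'c] := approx e e0.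
by rewrite ltr_norml => /andP[? ?]; lra.
Qed.

Lemma ge_of_approx (R : realFieldType) (x c : R) :
  (forall e, 0 < e -> exists2 x', `|x' - x| < e & c <= x') -> c <= x.
Proof.
move=> approx; rewrite -lerN2; apply: le_of_approx => e /approx[x' x'x cx'].
by exists (- x'); rewrite ?lerN2 // -opprD normrN.
Qed.

Section Feasibility.
Variables (R : realType) (n m p : nat).
Variables (Delta : 'I_n -> 'I_m -> bool) (Lambda : 'I_p -> 'I_m -> bool)
          (d : 'I_p -> R) (u : 'I_n -> R) (tau : nat).
Notation V := (Vset Delta Lambda d).

Definition Vclosure (v : 'I_n -> R) : Prop :=
  forall e, 0 < e -> exists2 v', V v' & forall a, `|v' a - v a| < e.

Lemma Vset_closure v : V v -> Vclosure v.
Proof. by move=> Vv e e0; exists v => // a; rewrite subrr normr0. Qed.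

Lemma Vclosure_ge0 v : Vclosure v -> forall a, 0 <= v a.
Proof.
move=> Vv a; apply: ge_of_approx => e /Vv[v' Vv' v'v].
by exists (v' a); [exact: v'v | exact: (Vset_ge0 Vv')].
Qed.

Lemma Ups_ge0 y : Ups u tau y -> forall a, 0 <= y a.
Proof. by move=> [Yy _] a; case/andP: (Yy a). Qed.

Lemma Ups_closed (y : 'I_n -> R) :
  (forall e, 0 < e -> exists2 y', Ups u tau y' & forall a, `|y' a - y a| < e) ->
  Ups u tau y.
Proof.
move=> approx; split.
  move=> a; apply/andP; split.
    by apply: ge_of_approx => e /approx[y' [Yy' _] y'y]; exists (y' a); case/andP: (Yy' a).
  by apply: le_of_approx => e /approx[y' [Yy' _] y'y]; exists (y' a); case/andP: (Yy' a).
(* Closer than its least positive coordinate, a point keeps every positive coordinate of y. *)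
pose e := \big[Num.min/1]_(a | 0 < y a) y a.
have e0 : 0 < e by apply/bigmin_gtP; split.
have [y' [_ card_y'] y'y] := approx e e0.
apply: leq_trans card_y'; apply: subset_leq_card; apply/fintype.subsetP => a.
rewrite !inE /= => ya0; have : e <= y a by exact: bigmin_le_cond.
by have := y'y a; rewrite -/e ltr_norml => /andP[? ?] ?; lra.
Qed.

End Feasibility.

Lemma sqdist_lt_close (R : realType) (n : nat) (y v y' v' : 'I_n -> R) (e : R) :
  0 < e -> sqdist y v y' v' < e ^+ 2 ->
  forall a, `|y a - y' a| < e /\ `|v a - v' a| < e.
Proof.
move=> e0 dist_lt a.
have term_le (x x' : 'I_n -> R) : (x a - x' a) ^+ 2 <= \sum_(b < n) (x b - x' b) ^+ 2.
  by rewrite (bigD1 a) //= lerDl sumr_ge0 // => b _; rewrite sqr_ge0.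
have sum_ge0 (x x' : 'I_n -> R) : 0 <= \sum_(b < n) (x b - x' b) ^+ 2.
  by rewrite sumr_ge0 // => b _; rewrite sqr_ge0.
have := term_le y y'; have := term_le v v'; have := sum_ge0 y y'; have := sum_ge0 v v'.
by move: dist_lt; rewrite /sqdist !ltr_norml => *; split; apply/andP; split; nra.
Qed.

Section AMADescent.
Variables (R : realType) (n m p : nat).
Variables (Delta : 'I_n -> 'I_m -> bool) (Lambda : 'I_p -> 'I_m -> bool)
          (d : 'I_p -> R) (u : 'I_n -> R) (tau : nat) (t : 'I_n -> R -> R -> R)
          (G : 'I_n -> R -> R) (eta : R) (dg : ('I_n -> R) -> ('I_n -> R)).
Hypothesis t_cont : forall a y s, 0 <= y -> {for (y, s), continuous (fun q : R * R => t a q.1 q.2)}.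
Hypothesis t_nd : forall a y, 0 <= y -> {homo t a y : s1 s2 / s1 <= s2}.
Hypothesis G_cont : forall a y, 0 <= y -> {for y, continuous (G a)}.
Variables (rho beta : R) (yk vk : 'I_n -> R).
Hypothesis yk_Ups : Ups u tau yk.
Hypothesis vk_closure : Vclosure Delta Lambda d vk.
Notation V := (Vset Delta Lambda d).
Notation Psik := (Psi Delta Lambda d t G eta dg rho beta yk vk).

Let Psi_cvg_at := @Psi_cvg R n m p Delta Lambda d t G eta dg rho beta yk vk t_cont t_nd G_cont.

Lemma Psi_le_center v1 : (forall v', V v' -> Psik yk v1 <= Psik yk v') ->
  Psik yk v1 <= Psik yk vk.
Proof.
move=> v1_min.
apply: (@nonneg_nbhs_ge _ _ (fun z => Psik z.1 z.2) (yk, vk)).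
  by apply: Psi_cvg_at => a; split; [exact: Ups_ge0 yk_Ups a | exact: Vclosure_ge0 vk_closure a].
move=> e e0; have [v' Vv' v'vk] := vk_closure e0.
exists (yk, v'); last exact: v1_min.
move=> a; split; first by split; [exact: Ups_ge0 yk_Ups a | exact: Vset_ge0 Vv' a].
by rewrite /= subrr normr0; split; last exact: v'vk.
Qed.

Section Iterates.
Variables (ys vs : nat -> 'I_n -> R).
Hypothesis ys0 : ys 0%N = yk.
Hypothesis vs_min : forall j, V (vs j.+1) /\
  forall v', V v' -> Psik (ys j) (vs j.+1) <= Psik (ys j) v'.
Hypothesis ys_min : forall j, Ups u tau (ys j.+1) /\
  forall y', Ups u tau y' -> Psik (ys j.+1) (vs j.+1) <= Psik y' (vs j.+1).

Lemma AMA_iterates_le j : Psik (ys j.+1) (vs j.+1) <= Psik yk vk.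
Proof.
elim: j => [|j IHj].
  apply: le_trans ((ys_min 0).2 _ yk_Ups) _; apply: Psi_le_center.
  by have := (vs_min 0).2; rewrite ys0.
apply: le_trans IHj; apply: le_trans ((ys_min j.+1).2 _ (ys_min j).1) _.
exact: (vs_min j.+1).2 _ (vs_min j).1.
Qed.

Lemma AMA_accum_descent out : accum_point (fun j => (ys j.+1, vs j.+1)) out ->
  [/\ Ups u tau out.1, Vclosure Delta Lambda d out.2 & Psik out.1 out.2 <= Psik yk vk].
Proof.
move=> acc.
have close e : 0 < e -> exists j,
    forall a, `|ys j.+1 a - out.1 a| < e /\ `|vs j.+1 a - out.2 a| < e.
  move=> e0; have [j [_ hj]] := acc (e ^+ 2) (exprn_gt0 2 e0) 0%N.
  by exists j; exact: sqdist_lt_close.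
have Uout : Ups u tau out.1.
  apply: Ups_closed => e /close[j hj].
  by exists (ys j.+1); [exact: (ys_min j).1 | move=> a; case: (hj a)].
have Vout : Vclosure Delta Lambda d out.2.
  move=> e /close[j hj].
  by exists (vs j.+1); [exact: (vs_min j).1 | move=> a; case: (hj a)].
split => //; apply: (@nonneg_nbhs_le _ _ (fun z => Psik z.1 z.2) out).
  by apply: Psi_cvg_at => a; split; [exact: Ups_ge0 Uout a | exact: Vclosure_ge0 Vout a].
move=> e /close[j hj]; exists (ys j.+1, vs j.+1); last exact: AMA_iterates_le.
move=> a; split; last exact: hj a.
by split; [exact: Ups_ge0 (ys_min j).1 a | exact: Vset_ge0 (vs_min j).1 a].
Qed.

End Iterates.

Lemma AMA_out_descent out :
  AMA_out Delta Lambda d u tau t G eta dg rho beta yk vk yk out ->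
  [/\ Ups u tau out.1, Vclosure Delta Lambda d out.2 & Psik out.1 out.2 <= Psik yk vk].
Proof.
move=> [ys [vs [ys0 [vs_min [ys_min [[J [_ [_ ->]]] | [_ acc]]]]]]].
  split; [exact: (ys_min J).1 | exact/Vset_closure/(vs_min J).1 | exact: AMA_iterates_le].
exact: AMA_accum_descent acc.
Qed.

End AMADescent.

Lemma executed_pred (K : option nat) (k : nat) :
  executed K k.+1 -> executed K k /\ K <> Some k.
Proof.
case: K => [K0|] //= kK0; split; first exact: ltnW.
by case=> K0k; rewrite K0k ltnn in kK0.
Qed.

Section Descent.
Variables (R : realType) (n m p : nat).
Variables (Delta : 'I_n -> 'I_m -> bool) (Lambda : 'I_p -> 'I_m -> bool)
          (d : 'I_p -> R) (t : 'I_n -> R -> R -> R)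
          (G : 'I_n -> R -> R) (eta : R) (dg : ('I_n -> R) -> ('I_n -> R)).
Notation g := (gval Delta Lambda d t).

Lemma psi_le_of_Psi_le (rho beta : R) (y0 v0 y1 v1 : 'I_n -> R) : 0 <= rho ->
  Psi Delta Lambda d t G eta dg rho beta y0 v0 y1 v1
    <= Psi Delta Lambda d t G eta dg rho beta y0 v0 y0 v0 ->
  \sum_(a < n) dg y0 a * (y1 a - y0 a) <= g y1 - g y0 ->
  psi Delta Lambda d t G eta y1 v1 rho
    <= psi Delta Lambda d t G eta y0 v0 rho - rho * beta * sqdist y1 v1 y0 v0.
Proof.
move=> rho0; rewrite /Psi /psi /Phi /phi.
have -> : sqdist y0 v0 y0 v0 = 0.
  by rewrite /sqdist !big1 ?addr0 // => a _; rewrite subrr expr0n.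
have -> : \sum_(a < n) dg y0 a * (y0 a - y0 a) = 0.
  by rewrite big1 // => a _; rewrite subrr mulr0.
move=> Psi_le lin_le; have := ler_wpM2l rho0 lin_le; lra.
Qed.

End Descent.

Section PDCIterates.
Variables (R : realType) (n m p : nat).
Variables (Delta : 'I_n -> 'I_m -> bool) (Lambda : 'I_p -> 'I_m -> bool)
          (d : 'I_p -> R) (u : 'I_n -> R) (tau : nat) (t : 'I_n -> R -> R -> R)
          (G : 'I_n -> R -> R) (eta : R) (dg : ('I_n -> R) -> ('I_n -> R)).
Hypothesis t_cont : forall a y s, 0 <= y -> {for (y, s), continuous (fun q : R * R => t a q.1 q.2)}.
Hypothesis t_nd : forall a y, 0 <= y -> {homo t a y : s1 s2 / s1 <= s2}.
Hypothesis G_cont : forall a y, 0 <= y -> {for y, continuous (G a)}.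
Variables (eps1 eps2 eps3 theta_l theta_u rho0 sigma : R) (y0 : 'I_n -> R)
          (y v : nat -> ('I_n -> R)) (rho beta : nat -> R) (K : option nat).
Hypothesis rho0_gt0 : 0 < rho0.
Hypothesis sigma_gt1 : 1 < sigma.
Hypothesis y0_Ups : Ups u tau y0.
Hypothesis run : PDC_run Delta Lambda d u tau t G eta dg eps1 eps2 eps3 theta_l theta_u
  rho0 sigma y0 y v rho beta K.

Lemma PDC_invariant k : executed K k ->
  [/\ 0 < rho k, Ups u tau (y k) & Vclosure Delta Lambda d (v k)].
Proof.
case: run => y0E [Vv0 _] rho0E _ step.
elim: k => [_|k IHk /executed_pred[ek nK]].
  by rewrite rho0E y0E; split => //; exact: Vset_closure.
have [rho_gt0 Uy Vv] := IHk ek.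
have [ama _ /(_ nK)[rhoE _]] := step k ek.
have [Uy1 Vv1 _] := AMA_out_descent t_cont t_nd G_cont Uy Vv ama.
split => //; rewrite rhoE; case: ifP => // _.
by rewrite mulr_gt0 // (lt_trans ltr01 sigma_gt1).
Qed.

End PDCIterates.

Theorem proposition4p3 (R : realType) (n m p : nat)
  (Delta : 'I_n -> 'I_m -> bool) (Lambda : 'I_p -> 'I_m -> bool)
  (d : 'I_p -> R) (u : 'I_n -> R) (tau : nat)
  (t : 'I_n -> R -> R -> R) (G : 'I_n -> R -> R) (eta : R)
  (dg : ('I_n -> R) -> ('I_n -> R))
  (eps1 eps2 eps3 theta_l theta_u rho0 sigma : R) (y0 : 'I_n -> R)
  (y v : nat -> ('I_n -> R)) (rho beta : nat -> R) (K : option nat) :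
  (* network data *)
  (forall r : 'I_m, exists! w : 'I_p, Lambda w r) ->
  (forall w : 'I_p, exists r : 'I_m, Lambda w r) ->
  (forall w, 0 < d w) ->
  (forall a, 0 <= u a) ->
  (1 <= tau <= n)%N ->
  0 < eta ->
  (* t_a continuously differentiable (jointly) for y_a >= 0 *)
  (forall a (q : R * R), 0 <= q.1 ->
     differentiable (fun z : R * R => t a z.1 z.2) q) ->
  (forall a (e : R * R),
     {within [set q : R * R | 0 <= q.1],
       continuous (fun q : R * R => 'd (fun z : R * R => t a z.1 z.2) q e)}) ->
  (* t_a strictly increasing in v_a for y_a >= 0 *)
  (forall a y1 w1 w2, 0 <= y1 -> w1 < w2 -> t a y1 w1 < t a y1 w2) ->
  (* G_a nonnegative, C^1, strictly increasing, convex (on y_a >= 0) *)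
  (forall a y1, 0 <= y1 -> 0 <= G a y1) ->
  (forall a y1, 0 <= y1 -> derivable (G a) y1 1) ->
  (forall a, {within [set y1 : R | 0 <= y1], continuous (derive1 (G a))}) ->
  (forall a y1 y2, 0 <= y1 -> y1 < y2 -> G a y1 < G a y2) ->
  (forall a y1 y2 lam, 0 <= y1 -> 0 <= y2 -> 0 <= lam <= 1 ->
     G a (lam * y1 + (1 - lam) * y2) <= lam * G a y1 + (1 - lam) * G a y2) ->
  (* int_0^{v_a} t_a(y_a,w)dw and t_a(y_a,v_a) v_a jointly convex *)
  (forall a y1 w1 y2 w2 lam, 0 <= y1 -> 0 <= w1 -> 0 <= y2 -> 0 <= w2 ->
     0 <= lam <= 1 ->
     prim t a (lam * y1 + (1 - lam) * y2) (lam * w1 + (1 - lam) * w2)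
       <= lam * prim t a y1 w1 + (1 - lam) * prim t a y2 w2) ->
  (forall a y1 w1 y2 w2 lam, 0 <= y1 -> 0 <= w1 -> 0 <= y2 -> 0 <= w2 ->
     0 <= lam <= 1 ->
     t a (lam * y1 + (1 - lam) * y2) (lam * w1 + (1 - lam) * w2)
       * (lam * w1 + (1 - lam) * w2)
       <= lam * (t a y1 w1 * w1) + (1 - lam) * (t a y2 w2 * w2)) ->
  (* dg is the gradient of g on Y *)
  (forall yb y1, Yset u yb -> Yset u y1 ->
     (fun s : R => (gval Delta Lambda d t (fun a => yb a + s * (y1 a - yb a))
                    - gval Delta Lambda d t yb) / s)
       @ 0^'+ --> \sum_(a < n) dg yb a * (y1 a - yb a)) ->
  (* PDC parameters *)
  0 < eps1 -> 0 < eps2 -> 0 < eps3 -> 0 < theta_l -> theta_l < theta_u ->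
  0 < rho0 -> 1 < sigma -> Ups u tau y0 ->
  (* the iterates of PDC *)
  PDC_run Delta Lambda d u tau t G eta dg eps1 eps2 eps3 theta_l theta_u
    rho0 sigma y0 y v rho beta K ->
  forall k, executed K k ->
    psi Delta Lambda d t G eta (y k.+1) (v k.+1) (rho k)
      <= psi Delta Lambda d t G eta (y k) (v k) (rho k)
         - rho k * beta k * sqdist (y k.+1) (v k.+1) (y k) (v k).
Proof.
move=> route_od _ _ _ _ _ t_diff _ t_incr _ G_der _ _ _ prim_convex _ g_dir_deriv
  _ _ _ _ _ rho0_gt0 sigma_gt1 y0_Ups run k ek.
have t_cont a y1 s : 0 <= y1 -> {for (y1, s), continuous (fun q : R * R => t a q.1 q.2)}.
  by move=> y10; apply: differentiable_continuous; exact: t_diff.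
have t_nd a y1 : 0 <= y1 -> {homo t a y1 : s1 s2 / s1 <= s2}.
  by move=> y10 s1 s2; rewrite le_eqVlt => /predU1P[-> // | /(t_incr a _ _ _ y10)/ltW].
have G_cont a y1 : 0 <= y1 -> {for y1, continuous (G a)}.
  by move=> y10; apply/differentiable_continuous/derivable1_diffP; exact: G_der.
have [_ [Vv0 _] _ _ step] := run.
have [rho_gt0 Uy Vv] := PDC_invariant t_cont t_nd G_cont rho0_gt0 sigma_gt1 y0_Ups run ek.
have [ama _ _] := step k ek.
have [Uy1 _ descent] := AMA_out_descent t_cont t_nd G_cont Uy Vv ama.
apply: psi_le_of_Psi_le (ltW rho_gt0) descent _.
apply: (gval_gradient_ineq route_od t_cont t_nd (ex_intro _ _ Vv0) prim_convex
  (Ups_ge0 Uy1) (Ups_ge0 Uy) (g_dir_deriv _ _ Uy.1 Uy1.1)).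
Qed.
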